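(* Let $m,n$ be positive integers, $r\le\min\{m,n\}$ a nonnegative integer and $a\in\{0,1,\dots,r\}$. If $Q(\lambda)$ is an $m\times n$ complex matrix pencil with $Q\in{\cal C}_a^r$ and normal rank of $Q$ equal to $r$, then (i) $\varepsilon(Q)\leq a$ and (ii) $\eta(Q)\leq r-a$.
   Context: A matrix pencil is $A+\lambda B$ with complex matrices $A,B$. The normal rank is the rank over $\mathbb{C}(\lambda)$. The degree of a vector polynomial is the maximum degree of its entries. ${\cal C}_a^r$ is the set of all $m\times n$ pencils $u_1(\lambda)v_1(\lambda)^T+\cdots+u_r(\lambda)v_r(\lambda)^T$ with $u_i\in\mathbb{C}[\lambda]^m$, $v_i\in\mathbb{C}[\lambda]^n$ of degree at most $1$, $\deg u_1=\cdots=\deg u_a=0$ and $\deg v_{a+1}=\cdots=\deg v_r=0$. In the Kronecker canonical form of $Q$, the right singular blocks $L_{\varepsilon_1},\dots,L_{\varepsilon_p}$ and left singular blocks $L_{\eta_1}^T,\dots,L_{\eta_q}^T$ (where $L_k$ is the $k\times(k+1)$ pencil with $\lambda$ at $(i,i)$ and $1$ at $(i,i+1)$) have orders called the right (column) and left (row) minimal indices of $Q$; $\varepsilon(Q)=\sum_i\varepsilon_i$ and $\eta(Q)=\sum_j\eta_j$ denote their sums. *)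

From HB Require Import structures.
From mathcomp Require Import all_boot all_order all_algebra.
From mathcomp Require Import fraction complex reals.
Set Implicit Arguments.
Unset Strict Implicit.
Unset Printing Implicit Defensive.
Import Order.TTheory GRing.Theory Num.Theory.
Local Open Scope ring_scope.

Section Pencils.
Variable C : fieldType.

Definition pencil_mx (p q : nat) (A B : 'M[C]_(p, q)) : 'M[{poly C}]_(p, q) :=
  map_mx polyC A + 'X *: map_mx polyC B.

Definition normal_rank (p q : nat) (Q : 'M[{poly C}]_(p, q)) : nat :=
  \rank (map_mx (@FracField.tofrac {poly C}) Q : 'M[{fraction {poly C}}]_(p, q)).

(* "degree at most d" for a vector polynomial (max of entry degrees;
   the zero vector counts as having degree <= d). *)
Definition vdeg_le (p : nat) (d : nat) (u : 'cV[{poly C}]_p) : bool :=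
  [forall i, (size (u i ord0) <= d.+1)%N].

Definition in_Car (m n : nat) (a r : nat) (Q : 'M[{poly C}]_(m, n)) : Prop :=
  exists (u : 'I_r -> 'cV[{poly C}]_m) (v : 'I_r -> 'cV[{poly C}]_n),
    [/\ forall i, vdeg_le 1 (u i) /\ vdeg_le 1 (v i),
        forall i : 'I_r, (i < a)%N -> vdeg_le 0 (u i),
        forall i : 'I_r, (a <= i)%N -> vdeg_le 0 (v i)
      & Q = \sum_(i < r) (u i *m (v i)^T)].

Record pencil := Pencil { prow : nat; pcol : nat;
  pA : 'M[C]_(prow, pcol); pB : 'M[C]_(prow, pcol) }.

Definition pdsum (P1 P2 : pencil) : pencil :=
  @Pencil (prow P1 + prow P2) (pcol P1 + pcol P2)
    (block_mx (pA P1) 0 0 (pA P2)) (block_mx (pB P1) 0 0 (pB P2)).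

Definition pempty : pencil := @Pencil 0 0 0 0.

(* KL k  : L_k (k x (k+1)), lambda at (i,i), 1 at (i,i+1)
   KLT k : L_k^T
   KJ k mu : J_k(mu) + lambda I_k   (finite eigenvalue mu)
   KN k  : I_k + lambda N_k         (infinite eigenvalue) *)
Inductive kblock := KL of nat | KLT of nat | KJ of nat & C | KN of nat.

Definition Lpencil (k : nat) : pencil :=
  @Pencil k k.+1 (\matrix_(i < k, j < k.+1) ((j : nat) == i.+1)%:R)
                 (\matrix_(i < k, j < k.+1) ((j : nat) == i)%:R).

Definition shift_mx (k : nat) : 'M[C]_k :=
  \matrix_(i < k, j < k) ((j : nat) == i.+1)%:R.

Definition block_pencil (b : kblock) : pencil :=
  match b with
  | KL k => Lpencil k
  | KLT k => @Pencil k.+1 k (pA (Lpencil k))^T (pB (Lpencil k))^T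
  | KJ k mu => @Pencil k k (mu%:M + shift_mx k) 1%:M
  | KN k => @Pencil k k 1%:M (shift_mx k)
  end.

Definition kcf_pencil (bs : seq kblock) : pencil :=
  foldr (fun b P => pdsum (block_pencil b) P) pempty bs.

Definition block_ok (b : kblock) : bool :=
  match b with KJ k _ | KN k => (0 < k)%N | _ => true end.

Definition strict_equiv (m n : nat) (A B : 'M[C]_(m, n)) (P : pencil) : Prop :=
  exists (U : 'M[C]_(m, prow P)) (U' : 'M[C]_(prow P, m))
         (V : 'M[C]_(pcol P, n)) (V' : 'M[C]_(n, pcol P)),
    [/\ U *m U' = 1%:M, U' *m U = 1%:M, V *m V' = 1%:M, V' *m V = 1%:M
       & A = U *m pA P *m V /\ B = U *m pB P *m V].

Definition is_KCF (m n : nat) (A B : 'M[C]_(m, n)) (bs : seq kblock) : Prop :=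
  all block_ok bs /\ strict_equiv A B (kcf_pencil bs).

(* sums of right (column) and left (row) minimal indices read off a KCF *)
Definition eps_sum (bs : seq kblock) : nat :=
  \sum_(b <- bs) (if b is KL k then k else 0%N).
Definition eta_sum (bs : seq kblock) : nat :=
  \sum_(b <- bs) (if b is KLT k then k else 0%N).

End Pencils.

From HB Require Import structures.
From mathcomp Require Import all_boot all_order all_algebra.
From mathcomp Require Import fraction complex reals zify.
Set Implicit Arguments.
Unset Strict Implicit.
Unset Printing Implicit Defensive.
Import GRing.Theory Num.Theory.
Local Open Scope ring_scope.

(* For a polynomial matrix P let deg_rank d P be the dimension of the space of products
   P x with deg x <= d.  Multiplication by constant matrices cannot increase it, so it is
   invariant under strict equivalence, and it is superadditive on direct sums.  Writing
   Q in C_a^r as sum_i u_i v_i^T, the term u_i v_i^T contributes at most d + 2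
   dimensions when deg v_i <= 1 (i < a) and d + 1 when v_i is constant, so
   deg_rank d Q <= r (d + 1) + a.
   On the other side, a Kronecker block of order k contributes at least k (d + 1): the
   blocks other than L_k have trivial kernel, and L_k even contributes k (d + 1) + k once
   k <= d + 1, since its kernel consists of the vectors ((-lambda)^j x_0)_j with
   deg x_0 <= d - k.  The orders add up to K >= r, the normal rank, so d = eps(Q) gives
   K (d + 1) + eps(Q) <= r (d + 1) + a, i.e. eps(Q) <= a.  Transposition exchanges L_k with
   L_k^T and C_a^r with C_(r-a)^r, which gives eta(Q) <= r - a. *)

Lemma sum_ord_ltn r a : (\sum_(i < r) (i < a) = minn r a)%N.
Proof.
elim: r => [|r IH]; first by rewrite big_ord0 min0n.
by rewrite big_ord_recr /= IH; case: ltnP; lia.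
Qed.

Lemma leq_sum_bounded (T : Type) (s : seq T) (w F G : T -> nat) D :
  (\sum_(x <- s) w x <= D)%N -> (forall x, w x <= D -> F x <= G x)%N ->
  (\sum_(x <- s) F x <= \sum_(x <- s) G x)%N.
Proof.
elim: s => [|x s IHs]; rewrite ?big_nil // !big_cons => le_wD le_FG.
by rewrite leq_add ?le_FG ?IHs // (leq_trans _ le_wD) ?leq_addr ?leq_addl.
Qed.

Lemma sum_delta (R : nzSemiRingType) n (f : 'I_n -> R) (j0 : 'I_n) c :
  nat_of_ord j0 = c -> \sum_(j < n) (((j : nat) == c)%:R * f j) = f j0.
Proof.
move=> <-; rewrite (bigD1 j0) //= eqxx mul1r big1 ?addr0 // => j hj.
by move: hj; rewrite -(inj_eq val_inj) /= => /negbTE ->; rewrite mul0r.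
Qed.

Lemma mulmx_det_eq0 (R : idomainType) n p (M : 'M[R]_n) (x : 'M[R]_(n, p)) :
  \det M != 0 -> M *m x = 0 -> x = 0.
Proof.
move=> nz_detM Mx0; apply/eqP.
have /eqP : \det M *: x = 0 by rewrite -mul_scalar_mx -mul_adj_mx -mulmxA Mx0 mulmx0.
by rewrite scalemx_eq0 (negbTE nz_detM).
Qed.

Lemma dimv_limg_le (K : fieldType) (aT rT : vectType K) (f : 'Hom(aT, rT)) U :
  (\dim (f @: U) <= \dim U)%N.
Proof. by rewrite -(limg_ker_dim f U) leq_addl. Qed.

Lemma dimv_le_dim (K : fieldType) (vT : vectType K) (U : {vspace vT}) :
  (\dim U <= dim vT)%N.
Proof. by rewrite -dimvf dimvS ?subvf. Qed.

Section DegreeRank.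
Variable C : fieldType.

Definition cVpoly q d (X : 'M[C]_(q, d)) : 'cV[{poly C}]_q :=
  \col_i rVpoly (row i X).

Definition poly_cV q d (y : 'cV[{poly C}]_q) : 'M[C]_(q, d) :=
  \matrix_i poly_rV (y i ord0).

Lemma cVpolyD q d (X Y : 'M[C]_(q, d)) : cVpoly (X + Y) = cVpoly X + cVpoly Y.
Proof. by apply/colP => i; rewrite !mxE !linearD. Qed.

Lemma cVpolyZ q d a (X : 'M[C]_(q, d)) : cVpoly (a *: X) = a%:P *: cVpoly X.
Proof. by apply/colP => i; rewrite !mxE !linearZ /= mul_polyC. Qed.

Lemma poly_cVD q d (y z : 'cV[{poly C}]_q) :
  poly_cV d (y + z) = poly_cV d y + poly_cV d z.
Proof. by apply/matrixP => i j; rewrite !mxE coefD. Qed.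

Lemma poly_cVZ q d a (y : 'cV[{poly C}]_q) : poly_cV d (a%:P *: y) = a *: poly_cV d y.
Proof. by apply/matrixP => i j; rewrite !mxE coefCM. Qed.

Lemma poly_cV0 q d : poly_cV d (0 : 'cV[{poly C}]_q) = 0.
Proof. by apply/matrixP => i j; rewrite !mxE coef0. Qed.

Lemma size_cVpoly q d (X : 'M[C]_(q, d)) i : (size (cVpoly X i ord0) <= d)%N.
Proof. by rewrite mxE size_poly. Qed.

Lemma cVpolyK q d : cancel (@cVpoly q d) (poly_cV d).
Proof. by move=> X; apply/matrixP => i j; rewrite !mxE coef_rVpoly_ord mxE. Qed.

Lemma poly_cVK q d (y : 'cV[{poly C}]_q) :
  (forall i, size (y i ord0) <= d)%N -> cVpoly (poly_cV d y) = y.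
Proof. by move=> le_y_d; apply/colP => i; rewrite mxE rowK poly_rV_K. Qed.

Lemma cVpoly_eq0 q d (X : 'M[C]_(q, d)) : cVpoly X = 0 -> X = 0.
Proof. by move=> X0; rewrite -[X]cVpolyK X0 poly_cV0. Qed.

Lemma poly_cV_eq0 q d (y : 'cV[{poly C}]_q) :
  (forall i, size (y i ord0) <= d)%N -> poly_cV d y = 0 -> y = 0.
Proof.
move=> le_y_d y0; rewrite -(poly_cVK le_y_d) y0.
by apply/colP => i; rewrite !mxE row0 linear0.
Qed.

Lemma cVpoly_mul q q' d (V : 'M[C]_(q, q')) (X : 'M[C]_(q', d)) :
  cVpoly (V *m X) = map_mx polyC V *m cVpoly X.
Proof.
apply/colP => i; apply/polyP => k; rewrite !mxE coef_sum coef_rVpoly.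
under eq_bigr do rewrite !mxE coefCM coef_rVpoly.
case: insub => [j|]; last by rewrite big1 // => l _; rewrite mulr0.
by rewrite !mxE; apply: eq_bigr => l _; rewrite !mxE.
Qed.

Lemma poly_cV_mul p p' D (U : 'M[C]_(p', p)) (y : 'cV[{poly C}]_p) :
  poly_cV D (map_mx polyC U *m y) = U *m poly_cV D y.
Proof.
apply/matrixP => i j; rewrite !mxE coef_sum; apply: eq_bigr => k _.
by rewrite !mxE coefCM.
Qed.

Lemma cVpoly_col q1 q2 d (X1 : 'M[C]_(q1, d)) (X2 : 'M[C]_(q2, d)) :
  cVpoly (col_mx X1 X2) = col_mx (cVpoly X1) (cVpoly X2).
Proof.
apply/colP => i; case: (split_ordP i) => k ->;
  by rewrite ?col_mxEu ?col_mxEd !mxE ?rowKu ?rowKd.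
Qed.

Lemma poly_cV_col p1 p2 D (y1 : 'cV[{poly C}]_p1) (y2 : 'cV[{poly C}]_p2) :
  poly_cV D (col_mx y1 y2) = col_mx (poly_cV D y1) (poly_cV D y2).
Proof.
apply/matrixP => i j; case: (split_ordP i) => k ->;
  by rewrite !(col_mxEu, col_mxEd, mxE).
Qed.

Lemma size_mulmx_le p q (P : 'M[{poly C}]_(p, q)) (x : 'cV[{poly C}]_q) s t i :
  (forall i j, size (P i j) <= s.+1)%N -> (forall j, size (x j ord0) <= t.+1)%N ->
  (size ((P *m x) i ord0) <= (s + t).+1)%N.
Proof.
move=> le_P le_x; rewrite mxE.
apply: (big_ind (fun y : {poly C} => size y <= (s + t).+1)%N).
- by rewrite size_poly0.
- by move=> y z le_y le_z; rewrite (leq_trans (size_add _ _)) // geq_max le_y le_z.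
move=> j _; apply: leq_trans (size_mul_leq _ _) _.
by rewrite -subn1 leq_subLR (leq_trans (leq_add (le_P i j) (le_x j))) // addSn addnS.
Qed.

Definition coef_mulmx p q d D (P : 'M[{poly C}]_(p, q)) (X : 'M[C]_(q, d)) : 'M[C]_(p, D) :=
  poly_cV D (P *m cVpoly X).
Arguments coef_mulmx {p q} d D P X.

Fact coef_mulmx_is_semilinear p q d D (P : 'M[{poly C}]_(p, q)) :
  semilinear (coef_mulmx d D P).
Proof.
by split => [a X | X Y]; rewrite /coef_mulmx ?cVpolyZ ?cVpolyD -?scalemxAr
  ?mulmxDr ?poly_cVZ ?poly_cVD.
Qed.

HB.instance Definition _ p q d D (P : 'M[{poly C}]_(p, q)) :=
  GRing.isSemilinear.Build C 'M[C]_(q, d) 'M[C]_(p, D) _ (coef_mulmx d D P)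
    (coef_mulmx_is_semilinear d D P).

Lemma coef_mulmx_const p p' q q' d D (U : 'M[C]_(p', p)) (P : 'M[{poly C}]_(p, q))
    (V : 'M[C]_(q, q')) X :
  coef_mulmx d D (map_mx polyC U *m P *m map_mx polyC V) X
  = U *m coef_mulmx d D P (V *m X).
Proof. by rewrite /coef_mulmx cVpoly_mul -!mulmxA poly_cV_mul. Qed.

Lemma coef_mulmx_block p1 p2 q1 q2 d D (P1 : 'M[{poly C}]_(p1, q1))
    (P2 : 'M[{poly C}]_(p2, q2)) X1 X2 :
  coef_mulmx d D (block_mx P1 0 0 P2) (col_mx X1 X2)
  = col_mx (coef_mulmx d D P1 X1) (coef_mulmx d D P2 X2).
Proof.
by rewrite /coef_mulmx cVpoly_col mul_block_col !mul0mx addr0 add0r poly_cV_col.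
Qed.

Lemma coef_mulmxDl p q d D (P1 P2 : 'M[{poly C}]_(p, q)) X :
  coef_mulmx d D (P1 + P2) X = coef_mulmx d D P1 X + coef_mulmx d D P2 X.
Proof. by rewrite /coef_mulmx mulmxDl poly_cVD. Qed.

(* dim {P x | deg x <= d}, with the products truncated to degree d + 1; the truncation
   loses nothing when the entries of P have degree <= 1. *)
Definition deg_rank p q d (P : 'M[{poly C}]_(p, q)) : nat :=
  \dim (limg (linfun (coef_mulmx d.+1 d.+2 P))).

Lemma deg_rank_const_mul p p' q q' d (U : 'M[C]_(p', p)) (P : 'M[{poly C}]_(p, q))
    (V : 'M[C]_(q, q')) :
  (deg_rank d (map_mx polyC U *m P *m map_mx polyC V) <= deg_rank d P)%N.
Proof.
rewrite /deg_rank; set F := linfun (coef_mulmx _ _ P).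
apply: leq_trans (dimv_limg_le (linfun (mulmx U)) _); apply: dimvS.
apply/subvP => _ /memv_imgP[X _ ->]; rewrite lfunE /= coef_mulmx_const.
have -> : U *m coef_mulmx d.+1 d.+2 P (V *m X) = linfun (mulmx U) (F (V *m X)).
  by rewrite !lfunE.
by rewrite !memv_img ?memvf.
Qed.

Lemma deg_rank_block p1 p2 q1 q2 d (P1 : 'M[{poly C}]_(p1, q1))
    (P2 : 'M[{poly C}]_(p2, q2)) :
  (deg_rank d P1 + deg_rank d P2 <= deg_rank d (block_mx P1 0 0 P2))%N.
Proof.
rewrite /deg_rank; set F := linfun (coef_mulmx _ _ (block_mx _ _ _ _)).
set up := linfun (@usubmx C p1 p2 d.+2); set dn := linfun (@dsubmx C p1 p2 d.+2).
rewrite -(limg_ker_dim up (limg F)) [leqRHS]addnC leq_add //.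
  apply: dimvS; apply/subvP => _ /memv_imgP[X1 _ ->].
  have -> : linfun (coef_mulmx d.+1 d.+2 P1) X1 = up (F (col_mx X1 0)).
    by rewrite !lfunE /= coef_mulmx_block col_mxKu.
  by rewrite !memv_img ?memvf.
apply: leq_trans (dimv_limg_le dn _); apply: dimvS.
apply/subvP => _ /memv_imgP[X2 _ ->].
have -> : linfun (coef_mulmx d.+1 d.+2 P2) X2 = dn (F (col_mx 0 X2)).
  by rewrite !lfunE /= coef_mulmx_block col_mxKd.
rewrite memv_img // memv_cap memv_ker memv_img ?memvf //= !lfunE /=.
by rewrite coef_mulmx_block col_mxKu linear0.
Qed.

Lemma deg_rank_add p q d (P1 P2 : 'M[{poly C}]_(p, q)) :
  (deg_rank d (P1 + P2) <= deg_rank d P1 + deg_rank d P2)%N.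
Proof.
rewrite /deg_rank; apply: leq_trans (dimv_add_leqif _ _).1; apply: dimvS.
apply/subvP => _ /memv_imgP[X _ ->]; rewrite lfunE /= coef_mulmxDl.
by rewrite memv_add // -[coef_mulmx _ _ _ X]lfunE memv_img ?memvf.
Qed.

Lemma deg_rank0 p q d : deg_rank d (0 : 'M[{poly C}]_(p, q)) = 0%N.
Proof.
apply/eqP; rewrite dimv_eq0 -subv0; apply/subvP => _ /memv_imgP[X _ ->].
by rewrite lfunE /= /coef_mulmx mul0mx poly_cV0 memv0.
Qed.

Lemma deg_rank_sum I (s : seq I) (Pr : pred I) p q d (F : I -> 'M[{poly C}]_(p, q)) :
  (deg_rank d (\sum_(i <- s | Pr i) F i) <= \sum_(i <- s | Pr i) deg_rank d (F i))%N.
Proof.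
apply: (big_ind2 (fun P k => deg_rank d P <= k)%N) => //; first by rewrite deg_rank0.
by move=> P1 k1 P2 k2 le1 le2; rewrite (leq_trans (deg_rank_add _ _ _)) ?leq_add.
Qed.

Lemma deg_rank_mul_le p c q d e (U : 'M[{poly C}]_(p, c)) (V : 'M[{poly C}]_(c, q)) :
  (forall i j, size (V i j) <= e.+1)%N -> (deg_rank d (U *m V) <= c * (d + e).+1)%N.
Proof.
move=> le_V; rewrite /deg_rank.
set G := linfun (coef_mulmx (d + e).+1 d.+2 U).
set H := linfun (coef_mulmx d.+1 (d + e).+1 V).
have -> : linfun (coef_mulmx d.+1 d.+2 (U *m V)) = (G \o H)%VF.
  apply/lfunP => X; rewrite comp_lfunE !lfunE /= /coef_mulmx poly_cVK ?mulmxA //.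
  by move=> i; rewrite addnC size_mulmx_le // => j; rewrite size_cVpoly.
rewrite limg_comp (leq_trans (dimv_limg_le _ _)) //.
by rewrite (leq_trans (dimv_le_dim _)) // dim_matrix.
Qed.

Lemma deg_rank_Car m n a r d (Q : 'M[{poly C}]_(m, n)) :
  in_Car a r Q -> (deg_rank d Q <= r * d.+1 + a)%N.
Proof.
case=> u [v [deg_uv _ deg_v ->]].
apply: leq_trans (deg_rank_sum _ _ _ _) _.
apply: (@leq_trans (\sum_(i < r) (d.+1 + (i < a)))%N).
  apply: leq_sum => i _; rewrite addSn -[X in (_ <= X)%N]mul1n.
  apply: deg_rank_mul_le => k j; rewrite mxE (ord1 k).
  case: ltnP => [_ | le_ai]; last exact: (forallP (deg_v i le_ai) j).
  by case: (deg_uv i) => _ /forallP; apply.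
by rewrite big_split /= sum_nat_const card_ord sum_ord_ltn leq_add2l geq_minr.
Qed.

Lemma deg_rank_injective p q d (P : 'M[{poly C}]_(p, q)) :
  (forall i j, size (P i j) <= 2)%N -> (forall x : 'cV_q, P *m x = 0 -> x = 0) ->
  (q * d.+1 <= deg_rank d P)%N.
Proof.
move=> le_P P_inj; rewrite /deg_rank; set F := linfun (coef_mulmx _ _ P).
have kerF : lker F = 0%VS.
  apply/eqP; rewrite -subv0; apply/subvP => X; rewrite memv_ker memv0 lfunE /=.
  move/eqP => FX0; apply/eqP/cVpoly_eq0/P_inj/(poly_cV_eq0 _ FX0) => i.
  by apply: (size_mulmx_le (s := 1)) => // j; rewrite size_cVpoly.
have := limg_ker_dim F fullv.
by rewrite capfv kerF dimv0 add0n dimvf dim_matrix => ->.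
Qed.

Lemma size_pencil p q (A B : 'M[C]_(p, q)) i j : (size (pencil_mx A B i j) <= 2)%N.
Proof.
rewrite !mxE (leq_trans (size_add _ _)) // geq_max.
rewrite (leq_trans (size_polyC_leq1 _)) //= mulrC mul_polyC.
by rewrite (leq_trans (size_scale_leq _ _)) ?size_polyX.
Qed.

Lemma det_pencil_neq0 p q (A B : 'M[C]_(p, q)) (W : 'M[C]_(q, p)) :
  W *m A = 1%:M \/ W *m B = 1%:M -> \det (map_mx polyC W *m pencil_mx A B) != 0.
Proof.
rewrite /pencil_mx mulmxDr -scalemxAr -!map_mxM => -[-> | ->]; rewrite map_mx1.
  apply: contraTneq isT => /(congr1 (horner_eval 0)).
  rewrite -det_map_mx rmorph0 map_mxD map_mx1 map_mxZ /= horner_evalE hornerX.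
  by rewrite scale0r addr0 det1 => /eqP; rewrite oner_eq0.
have -> : map_mx polyC (W *m A) + 'X *: 1%:M = char_poly_mx (- (W *m A)).
  by rewrite /char_poly_mx map_mxN opprK addrC scalemx1.
exact/monic_neq0/char_poly_monic.
Qed.

Lemma deg_rank_pencil_inj p q d (A B : 'M[C]_(p, q)) (W : 'M[C]_(q, p)) :
  W *m A = 1%:M \/ W *m B = 1%:M -> (q * d.+1 <= deg_rank d (pencil_mx A B))%N.
Proof.
move=> W_inv; apply: deg_rank_injective => [|x Px0]; first exact: size_pencil.
by apply: (mulmx_det_eq0 (det_pencil_neq0 W_inv)); rewrite -mulmxA Px0 mulmx0.
Qed.

Local Notation Lpoly k :=
  (pencil_mx (pA (Lpencil C k)) (pB (Lpencil C k)) : 'M[{poly C}]_(k, k.+1)).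

Lemma Lpencil_mulE k (x : 'cV[{poly C}]_k.+1) (i : 'I_k) :
  (Lpoly k *m x) i ord0 = x (lift ord0 i) ord0 + 'X * x (widen_ord (leqnSn k) i) ord0.
Proof.
rewrite mxE (eq_bigr (fun j : 'I_k.+1 => ((j : nat) == i.+1)%:R * x j ord0
   + 'X * (((j : nat) == i)%:R * x j ord0))); last first.
  by move=> j _; rewrite !mxE !polyC_natr mulrDl mulrA.
by rewrite big_split /= -mulr_sumr (sum_delta _ (j0 := lift ord0 i)) //
  (sum_delta _ (j0 := widen_ord (leqnSn k) i)).
Qed.

Lemma Lpencil_kernel k (x : 'cV[{poly C}]_k.+1) :
  Lpoly k *m x = 0 -> forall j : 'I_k.+1, x j ord0 = (- 'X) ^+ j * x ord0 ord0.
Proof.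
move=> Lx0 [j lt_jk]; elim: j lt_jk => [|j IHj] lt_jk.
  by rewrite expr0 mul1r; congr (x _ _); apply: val_inj.
have /eqP := congr1 (fun y : 'cV_k => y (Ordinal (lt_jk : j < k)%N) ord0) Lx0.
rewrite Lpencil_mulE mxE addr_eq0 => /eqP.
have -> : lift ord0 (Ordinal (lt_jk : j < k)%N) = Ordinal lt_jk by apply: val_inj.
have -> : widen_ord (leqnSn k) (Ordinal (lt_jk : j < k)%N) = Ordinal (ltnW lt_jk).
  by apply: val_inj.
by move=> ->; rewrite IHj /= exprS !mulNr mulrA.
Qed.

Lemma size_exp_oppX k : size ((- 'X : {poly C}) ^+ k) = k.+1.
Proof.
have := size_exp (- 'X : {poly C}) k; rewrite size_opp size_polyX mul1n => size_k.
by rewrite -[in RHS]size_k prednK // size_poly_gt0 expf_neq0 // oppr_eq0 polyX_eq0.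
Qed.

Lemma deg_rank_Lpencil k d : (k <= d.+1)%N -> (k * d.+2 <= deg_rank d (Lpoly k))%N.
Proof.
move=> le_kd; rewrite /deg_rank; set F := linfun (coef_mulmx _ _ (Lpoly k)).
(* Vectors of lker F are ((-X)^j x_0)_j with deg x_0 <= d - k: T reads off x_0. *)
pose E0 := map_mx polyC (delta_mx 0 0 : 'M[C]_(1, k.+1)).
pose T := linfun (coef_mulmx d.+1 (d.+1 - k) E0).
have E0E X : (E0 *m cVpoly X) ord0 ord0 = cVpoly X ord0 ord0.
  by rewrite -cVpoly_mul -rowE !mxE row_id.
have ker_FT : (lker F :&: lker T = 0)%VS.
  apply/eqP; rewrite -subv0; apply/subvP => X.
  rewrite memv_cap !memv_ker memv0 !lfunE /= => /andP[/eqP FX0 /eqP TX0].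
  have Lx0 : Lpoly k *m cVpoly X = 0.
    apply: (poly_cV_eq0 _ FX0) => i.
    by apply: (size_mulmx_le (s := 1)) => [|j]; [exact: size_pencil | exact: size_cVpoly].
  have x0_eq0 : cVpoly X ord0 ord0 = 0.
    have [// | nz_x0] := eqVneq (cVpoly X ord0 ord0) 0.
    have le_x0 : (size (cVpoly X ord0 ord0) <= d.+1 - k)%N.
      have := size_cVpoly X ord_max; rewrite (Lpencil_kernel Lx0 ord_max) /=.
      by rewrite size_mul ?expf_neq0 ?oppr_eq0 ?polyX_eq0 // size_exp_oppX leq_subRL.
    have E0x0 : E0 *m cVpoly X = 0.
      by apply: (poly_cV_eq0 _ TX0) => i; rewrite (ord1 i) E0E.
    by rewrite -E0E E0x0 mxE.
  by apply/eqP/cVpoly_eq0/colP => j; rewrite (Lpencil_kernel Lx0) x0_eq0 mulr0 mxE.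
have le_kerF : (\dim (lker F) <= d.+1 - k)%N.
  by rewrite -(limg_dim_eq ker_FT) (leq_trans (dimv_le_dim _)) // dim_matrix mul1r.
have := limg_ker_dim F fullv; rewrite capfv dimvf dim_matrix -[(_ * _)%R]/(k.+1 * d.+1)%N.
by rewrite !mulSn !mulnS; lia.
Qed.

End DegreeRank.

Section KroneckerBlocks.
Variable C : fieldType.

Definition pencil_poly (P : pencil C) := pencil_mx (pA P) (pB P).

Definition ptrmx (P : pencil C) : pencil C := Pencil (pA P)^T (pB P)^T.

Definition pdsums (ps : seq (pencil C)) : pencil C := foldr (@pdsum C) (pempty C) ps.

Lemma pencil_poly_dsum P1 P2 :
  pencil_poly (pdsum P1 P2) = block_mx (pencil_poly P1) 0 0 (pencil_poly P2).
Proof.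
rewrite /pencil_poly /pencil_mx /= !map_block_mx !map_mx0 scale_block_mx !scaler0.
by rewrite add_block_mx !addr0.
Qed.

Lemma deg_rank_pdsums d ps :
  (\sum_(P <- ps) deg_rank d (pencil_poly P) <= deg_rank d (pencil_poly (pdsums ps)))%N.
Proof.
elim: ps => [|P ps IHps]; first by rewrite big_nil.
rewrite big_cons /= pencil_poly_dsum (leq_trans _ (deg_rank_block _ _ _)) //.
by rewrite leq_add2l.
Qed.

Lemma normal_rank_pdsums ps :
  normal_rank (pencil_poly (pdsums ps)) = (\sum_(P <- ps) normal_rank (pencil_poly P))%N.
Proof.
elim: ps => [|P ps IHps]; first by rewrite big_nil; apply/eqP; rewrite -leqn0 rank_leq_row.
rewrite big_cons /= pencil_poly_dsum -IHps /normal_rank map_block_mx !map_mx0.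
exact: rank_diag_block_mx.
Qed.

Lemma normal_rank_const_mul p p' q q' (U : 'M[C]_(p', p)) (P : 'M[{poly C}]_(p, q))
    (V : 'M[C]_(q, q')) :
  (normal_rank (map_mx polyC U *m P *m map_mx polyC V) <= normal_rank P)%N.
Proof.
rewrite /normal_rank !map_mxM (leq_trans (mxrankM_maxl _ _)) //.
exact: mxrankM_maxr.
Qed.

Lemma pencil_mx_const_mul p p' q q' (U : 'M[C]_(p', p)) (A B : 'M[C]_(p, q))
    (V : 'M[C]_(q, q')) :
  pencil_mx (U *m A *m V) (U *m B *m V) = map_mx polyC U *m pencil_mx A B *m map_mx polyC V.
Proof. by rewrite /pencil_mx !map_mxM mulmxDr mulmxDl -scalemxAr -scalemxAl. Qed.

Lemma strict_equiv_const_mul m n (A B : 'M[C]_(m, n)) P : strict_equiv A B P ->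
  exists U V U' V',
    pencil_mx A B = map_mx polyC U *m pencil_poly P *m map_mx polyC V /\
    pencil_poly P = map_mx polyC U' *m pencil_mx A B *m map_mx polyC V'.
Proof.
case=> U [U' [V [V' [UU' U'U VV' V'V [-> ->]]]]].
exists U, V, U', V'; rewrite !pencil_mx_const_mul; split => //.
by rewrite -!mulmxA -map_mxM VV' map_mx1 mulmx1 !mulmxA -map_mxM U'U map_mx1 mul1mx.
Qed.

Lemma deg_rank_strict_equiv d m n (A B : 'M[C]_(m, n)) P : strict_equiv A B P ->
  deg_rank d (pencil_poly P) = deg_rank d (pencil_mx A B).
Proof.
case/strict_equiv_const_mul => U [V [U' [V' [EQ EP]]]].
by apply/eqP; rewrite eqn_leq; apply/andP; split;
  [rewrite EP | rewrite EQ]; apply: deg_rank_const_mul.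
Qed.

Lemma normal_rank_strict_equiv m n (A B : 'M[C]_(m, n)) P : strict_equiv A B P ->
  normal_rank (pencil_poly P) = normal_rank (pencil_mx A B).
Proof.
case/strict_equiv_const_mul => U [V [U' [V' [EQ EP]]]].
by apply/eqP; rewrite eqn_leq; apply/andP; split;
  [rewrite EP | rewrite EQ]; apply: normal_rank_const_mul.
Qed.

Lemma kcf_excess_le (g : kblock C -> pencil C) (k h : kblock C -> nat) m n a r
    (A B : 'M[C]_(m, n)) bs :
  in_Car a r (pencil_mx A B) -> normal_rank (pencil_mx A B) = r ->
  strict_equiv A B (pdsums (map g bs)) ->
  (forall b, normal_rank (pencil_poly (g b)) <= k b)%N ->
  (forall b d, h b <= d.+1 -> k b * d.+1 + h b <= deg_rank d (pencil_poly (g b)))%N ->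
  (\sum_(b <- bs) h b <= a)%N.
Proof.
move=> QCar rankQ equivQ le_rank le_deg_rank; set d := (\sum_(b <- bs) h b)%N.
have le_blocks : (\sum_(b <- bs) (k b * d.+1 + h b) <= deg_rank d (pencil_mx A B))%N.
  rewrite -(deg_rank_strict_equiv d equivQ) (leq_trans _ (deg_rank_pdsums _ _)) //.
  by rewrite big_map; apply: (leq_sum_bounded (leqnSn d)) => b; apply: le_deg_rank.
have le_rK : (r * d.+1 <= (\sum_(b <- bs) k b) * d.+1)%N.
  rewrite leq_pmul2r // -rankQ -(normal_rank_strict_equiv equivQ) normal_rank_pdsums.
  by rewrite big_map; apply: leq_sum => b _; apply: le_rank.
have := leq_trans le_blocks (deg_rank_Car d QCar).
rewrite big_split /= -big_distrl /= -/d; lia.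
Qed.

Definition kblock_order (b : kblock C) : nat :=
  match b with KL k | KLT k | KJ k _ | KN k => k end.

Definition kblock_eps (b : kblock C) : nat := if b is KL k then k else 0.

Definition kblock_eta (b : kblock C) : nat := if b is KLT k then k else 0.

Lemma Lpencil_pB_mulmx_tr k : pB (Lpencil C k) *m (pB (Lpencil C k))^T = 1%:M.
Proof.
apply/matrixP => i i'; rewrite !mxE.
under eq_bigr do rewrite !mxE.
by rewrite (sum_delta _ (j0 := widen_ord (leqnSn k) i)) // !mxE eq_sym.
Qed.

Lemma normal_rank_kblock b :
  (normal_rank (pencil_poly (block_pencil b)) <= kblock_order b)%N.
Proof. by case: b => [k|k|k mu|k]; rewrite /normal_rank ?rank_leq_row ?rank_leq_col. Qed.

Lemma normal_rank_kblock_tr b :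
  (normal_rank (pencil_poly (ptrmx (block_pencil b))) <= kblock_order b)%N.
Proof. by case: b => [k|k|k mu|k]; rewrite /normal_rank ?rank_leq_row ?rank_leq_col. Qed.

Lemma deg_rank_kblock b d : (kblock_eps b <= d.+1)%N ->
  (kblock_order b * d.+1 + kblock_eps b <= deg_rank d (pencil_poly (block_pencil b)))%N.
Proof.
case: b => [k|k|k mu|k] /= le_kd; rewrite ?addn0.
- by rewrite -mulnSr deg_rank_Lpencil.
- apply: (deg_rank_pencil_inj d (W := pB (Lpencil C k))); right.
  exact: Lpencil_pB_mulmx_tr.
- by apply: (deg_rank_pencil_inj d (W := 1%:M)); right; apply: mul1mx.
- by apply: (deg_rank_pencil_inj d (W := 1%:M)); left; apply: mul1mx.
Qed.

Lemma deg_rank_kblock_tr b d : (kblock_eta b <= d.+1)%N ->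
  (kblock_order b * d.+1 + kblock_eta b
     <= deg_rank d (pencil_poly (ptrmx (block_pencil b))))%N.
Proof.
case: b => [k|k|k mu|k] /= le_kd; rewrite ?addn0.
- apply: (deg_rank_pencil_inj d (W := pB (Lpencil C k))); right.
  exact: Lpencil_pB_mulmx_tr.
- by rewrite /pencil_poly /= !trmxK -mulnSr deg_rank_Lpencil.
- by apply: (deg_rank_pencil_inj d (W := 1%:M)); right; rewrite /= trmx1 mul1mx.
- by apply: (deg_rank_pencil_inj d (W := 1%:M)); left; rewrite /= trmx1 mul1mx.
Qed.

Lemma ptrmx_pdsums ps : ptrmx (pdsums ps) = pdsums (map ptrmx ps).
Proof.
elim: ps => [|P ps IHps] /=; first by rewrite /ptrmx /= !trmx0.
by rewrite -IHps /ptrmx /pdsum /= !tr_block_mx !trmx0.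
Qed.

Lemma strict_equiv_tr m n (A B : 'M[C]_(m, n)) P :
  strict_equiv A B P -> strict_equiv A^T B^T (ptrmx P).
Proof.
case=> U [U' [V [V' [UU' U'U VV' V'V [-> ->]]]]].
exists V^T, V'^T, U^T, U'^T; split; try by rewrite -trmx_mul ?V'V ?VV' ?U'U ?UU' trmx1.
by split; rewrite !trmx_mul !mulmxA.
Qed.

Lemma pencil_mx_tr m n (A B : 'M[C]_(m, n)) : pencil_mx A^T B^T = (pencil_mx A B)^T.
Proof. by rewrite /pencil_mx linearD linearZ /= !map_trmx. Qed.

Lemma normal_rank_tr m n (Q : 'M[{poly C}]_(m, n)) : normal_rank Q^T = normal_rank Q.
Proof. by rewrite /normal_rank -map_trmx mxrank_tr. Qed.

Lemma in_Car_tr m n a r (Q : 'M[{poly C}]_(m, n)) :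
  (a <= r)%N -> in_Car a r Q -> in_Car (r - a) r Q^T.
Proof.
move=> le_ar [u [v [deg_uv deg_u deg_v ->]]].
exists (fun i => v (rev_ord i)), (fun i => u (rev_ord i)); split.
- by move=> i; case: (deg_uv (rev_ord i)).
- by move=> i lt_i; apply: deg_v => /=; move: (ltn_ord i) lt_i; lia.
- by move=> i le_i; apply: deg_u => /=; move: (ltn_ord i) le_i; lia.
rewrite linear_sum /= (reindex_inj rev_ord_inj) /=; apply: eq_bigr => i _.
by rewrite trmx_mul trmxK.
Qed.

End KroneckerBlocks.

Theorem lemma3p3 (R : realType) (m n r a : nat) (A B : 'M[R[i]]_(m, n)) :
  (0 < m)%N -> (0 < n)%N -> (r <= minn m n)%N -> (a <= r)%N ->
  in_Car a r (pencil_mx A B) ->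
  normal_rank (pencil_mx A B) = r ->
  forall bs : seq (kblock R[i]), is_KCF A B bs ->
    (eps_sum bs <= a)%N /\ (eta_sum bs <= r - a)%N.
Proof.
move=> _ _ _ le_ar QCar rankQ bs [_ equivQ].
rewrite /kcf_pencil -foldr_map -/(pdsums _) in equivQ.
split.
  exact: kcf_excess_le QCar rankQ equivQ
    (@normal_rank_kblock _) (@deg_rank_kblock _).
have QtCar : in_Car (r - a) r (pencil_mx A^T B^T) by rewrite pencil_mx_tr; apply: in_Car_tr.
have rankQt : normal_rank (pencil_mx A^T B^T) = r by rewrite pencil_mx_tr normal_rank_tr.
have equivQt := strict_equiv_tr equivQ; rewrite ptrmx_pdsums -map_comp in equivQt.
exact: kcf_excess_le QtCar rankQt equivQt
  (@normal_rank_kblock_tr _) (@deg_rank_kblock_tr _).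
Qed.
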